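(* Let $I_{A_1,A_2}(x,y)=A_1(N(x),A_2(x,y))$ be a QL-implication. Then there exist a disjunctor $A$ and a fuzzy negation $N'$ such that, for every conjunctor $A'$, $I_{A_1,A_2}$ satisfies (A5) with $A'$ if and only if the $(A,N')$-implication $I_{A,N'}(x,y)=A(N'(x),y)$ satisfies (A5) with $A'$.
   Context: An aggregation function is a map $[0,1]^2\to[0,1]$, non-decreasing in each variable, with value $0$ at $(0,0)$ and $1$ at $(1,1)$; a conjunctor additionally has $A(1,0)=A(0,1)=0$, a disjunctor additionally has $A(1,0)=A(0,1)=1$. A fuzzy negation is a non-increasing $N:[0,1]\to[0,1]$ with $N(0)=1$, $N(1)=0$. A QL-implication is $I_{A_1,A_2}(x,y)=A_1(N(x),A_2(x,y))$ with $A_1,A_2$ aggregation functions and $N$ a fuzzy negation, such that $I_{A_1,A_2}$ is non-increasing in $x$ and $I(0,0)=I(1,1)=1$, $I(1,0)=0$. A fuzzy set on a nonempty set $U$ is a map $U\to[0,1]$, normal if it attains $1$. ''$I$ satisfies (A5) with $A'$'' means: for all nonempty sets $U,V$, all normal fuzzy sets $D$ on $U$, $B$ on $V$ and every $y\in V$, $\sup_{x\in U}A'(D(x),I(D(x),B(y)))=B(y)$. *)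

(* the unit interval is [0,1] inside Stdlib's R; binary
   operations on [0,1] are represented as R -> R -> R and all axioms are
   only required on [0,1]. *)
From Stdlib Require Import Reals.
Open Scope R_scope.

Definition unit_I (x : R) : Prop := 0 <= x <= 1.

Definition aggregation (A : R -> R -> R) : Prop :=
  (forall x y, unit_I x -> unit_I y -> unit_I (A x y)) /\
  (forall x1 x2 y, unit_I x1 -> unit_I x2 -> unit_I y -> x1 <= x2 -> A x1 y <= A x2 y) /\
  (forall x y1 y2, unit_I x -> unit_I y1 -> unit_I y2 -> y1 <= y2 -> A x y1 <= A x y2) /\
  A 0 0 = 0 /\ A 1 1 = 1.

Definition conjunctor (A : R -> R -> R) : Prop :=
  aggregation A /\ A 1 0 = 0 /\ A 0 1 = 0.

Definition disjunctor (A : R -> R -> R) : Prop :=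
  aggregation A /\ A 1 0 = 1 /\ A 0 1 = 1.

Definition fuzzy_negation (N : R -> R) : Prop :=
  (forall x, unit_I x -> unit_I (N x)) /\
  (forall x1 x2, unit_I x1 -> unit_I x2 -> x1 <= x2 -> N x2 <= N x1) /\
  N 0 = 1 /\ N 1 = 0.

Definition QL_op (A1 A2 : R -> R -> R) (N : R -> R) : R -> R -> R :=
  fun x y => A1 (N x) (A2 x y).

Definition QL_implication (A1 A2 : R -> R -> R) (N : R -> R) : Prop :=
  aggregation A1 /\ aggregation A2 /\ fuzzy_negation N /\
  (forall x1 x2 y, unit_I x1 -> unit_I x2 -> unit_I y -> x1 <= x2 ->
      QL_op A1 A2 N x2 y <= QL_op A1 A2 N x1 y) /\
  QL_op A1 A2 N 0 0 = 1 /\ QL_op A1 A2 N 1 1 = 1 /\ QL_op A1 A2 N 1 0 = 0.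

Definition AN_op (A : R -> R -> R) (N : R -> R) : R -> R -> R :=
  fun x y => A (N x) y.

Definition normal_fuzzy_set {U : Type} (D : U -> R) : Prop :=
  (forall u, unit_I (D u)) /\ exists u, D u = 1.

Definition satisfies_A5 (I : R -> R -> R) (A' : R -> R -> R) : Prop :=
  forall (U V : Type), inhabited U -> inhabited V ->
  forall (D : U -> R) (B : V -> R),
    normal_fuzzy_set D -> normal_fuzzy_set B ->
    forall y : V,
      is_lub (fun r => exists x : U, r = A' (D x) (I (D x) (B y))) (B y).

(* A fuzzy implication [I] is recovered from the operation [A u y := I (1 - u) y]
   through the standard negation, [I x y = A (1 - x) y], and the boundary values
   of [I] make [A] a disjunctor. A QL-implication is in particular such an [I],
   so it coincides with an (A,N')-implication and the two satisfy (A5) with the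
   same conjunctors. *)

From Stdlib Require Import Reals Lra FunctionalExtensionality.
Open Scope R_scope.

Definition fuzzy_implication (I : R -> R -> R) : Prop :=
  (forall x y, unit_I x -> unit_I y -> unit_I (I x y)) /\
  (forall x1 x2 y, unit_I x1 -> unit_I x2 -> unit_I y -> x1 <= x2 -> I x2 y <= I x1 y) /\
  (forall x y1 y2, unit_I x -> unit_I y1 -> unit_I y2 -> y1 <= y2 -> I x y1 <= I x y2) /\
  I 0 0 = 1 /\ I 1 1 = 1 /\ I 1 0 = 0.

Definition standard_negation (x : R) : R := 1 - x.

Definition disjunctor_of_implication (I : R -> R -> R) : R -> R -> R :=
  fun u y => I (standard_negation u) y.

Lemma unit_I_standard_negation (x : R) : unit_I x -> unit_I (standard_negation x).
Proof. unfold unit_I, standard_negation; lra. Qed.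

Lemma standard_negation_fuzzy_negation : fuzzy_negation standard_negation.
Proof.
  split; [exact unit_I_standard_negation|].
  unfold standard_negation; repeat split; intros; lra.
Qed.

Lemma fuzzy_implication_0_1 (I : R -> R -> R) : fuzzy_implication I -> I 0 1 = 1.
Proof.
  intros [range [_ [mono_y [I00 _]]]].
  assert (unit0 : unit_I 0) by (unfold unit_I; lra).
  assert (unit1 : unit_I 1) by (unfold unit_I; lra).
  assert (le01 : I 0 0 <= I 0 1) by (apply mono_y; auto; lra).
  destruct (range 0 1 unit0 unit1); lra.
Qed.

Lemma disjunctor_of_implication_disjunctor (I : R -> R -> R) :
  fuzzy_implication I -> disjunctor (disjunctor_of_implication I).
Proof.
  intros impI; pose proof (fuzzy_implication_0_1 I impI) as I01.
  destruct impI as [range [anti_x [mono_y [I00 [I11 I10]]]]].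
  unfold disjunctor, aggregation, disjunctor_of_implication, standard_negation.
  rewrite Rminus_0_r, Rminus_diag.
  split; [split; [|split; [|split; [|split]]]|split]; auto.
  - intros x y ux uy; apply range; auto. now apply unit_I_standard_negation.
  - intros x1 x2 y ux1 ux2 uy le.
    apply anti_x; try apply unit_I_standard_negation; auto; lra.
  - intros x y1 y2 ux uy1 uy2 le.
    apply mono_y; auto. now apply unit_I_standard_negation.
Qed.

Lemma AN_op_disjunctor_of_implication (I : R -> R -> R) :
  AN_op (disjunctor_of_implication I) standard_negation = I.
Proof.
  apply functional_extensionality; intro x.
  apply functional_extensionality; intro y.
  unfold AN_op, disjunctor_of_implication, standard_negation.
  now replace (1 - (1 - x)) with x by ring.
Qed.

Lemma QL_implication_fuzzy_implication (A1 A2 : R -> R -> R) (N : R -> R) :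
  QL_implication A1 A2 N -> fuzzy_implication (QL_op A1 A2 N).
Proof.
  intros [[range1 [_ [mono1_y _]]] [[range2 [_ [mono2_y _]]] [[rangeN _] [anti_x boundary]]]].
  split; [|split; [exact anti_x|split; [|exact boundary]]].
  - intros x y ux uy; apply range1; auto.
  - intros x y1 y2 ux uy1 uy2 le; apply mono1_y; auto.
Qed.

Theorem theorem4p14 (A1 A2 : R -> R -> R) (N : R -> R) :
  QL_implication A1 A2 N ->
  exists (A : R -> R -> R) (N' : R -> R),
    disjunctor A /\ fuzzy_negation N' /\
    forall A' : R -> R -> R, conjunctor A' ->
      (satisfies_A5 (QL_op A1 A2 N) A' <-> satisfies_A5 (AN_op A N') A').
Proof.
  intros QL.
  pose proof (QL_implication_fuzzy_implication A1 A2 N QL) as impI.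
  exists (disjunctor_of_implication (QL_op A1 A2 N)), standard_negation.
  split; [|split].
  - now apply disjunctor_of_implication_disjunctor.
  - exact standard_negation_fuzzy_negation.
  - intros A' _. now rewrite AN_op_disjunctor_of_implication.
Qed.
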